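(* Let $T$ be a ditree such that every source set of size at least $2$ and every sink set of size at least $2$ contains a leaf of $T$. Let $S\subseteq V(T)$ be the set of all sinks, all sources and all leaves of $T$. Then $S$ is a geodetic set of $T$ of minimum size.
   Context: All digraphs are finite, without loops or parallel arcs. The underlying undirected graph of a digraph is obtained by forgetting orientations and deleting parallel edges. A ditree is a digraph whose underlying undirected graph is a tree (it may contain $2$-cycles, i.e., pairs of opposite arcs $uv,vu$). A leaf is a vertex of degree $1$ in the underlying undirected graph. A source is a vertex with no in-neighbour; a sink is a vertex with no out-neighbour. For $S\subseteq V(D)$, $N^-(S)$ (resp. $N^+(S)$) is the set of vertices outside $S$ having an arc to (resp. from) some vertex of $S$. A source set is a maximal strongly connected component $S$ with $N^-(S)\setminus S=\emptyset$; a sink set is a maximal strongly connected component $S$ with $N^+(S)\setminus S=\emptyset$. For vertices $u,v$, $I(u,v)$ is the set of vertices on some shortest directed path from $u$ to $v$; for $S\subseteq V(D)$, $I(S)=\bigcup_{u,v\in S}(I(u,v)\cup I(v,u))$. A geodetic set is a set $S$ with $I(S)=V(D)$. *)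

From mathcomp Require Import all_boot.
Set Implicit Arguments. Unset Strict Implicit. Unset Printing Implicit Defensive.

(* A digraph on a finite vertex type V is an arc relation [a : rel V] with no
   loops; parallel arcs are impossible since arcs form a relation. *)
Section Digraphs.
Variables (V : finType) (a : rel V).

Definition loopless : Prop := forall x, ~~ a x x.

Definition und : rel V := fun x y => a x y || a y x.

(* undirected tree: connected and without (simple) cycles; in a simple
   undirected graph every cycle has at least 3 vertices *)
Definition und_connected : Prop := forall x y, connect und x y.
Definition und_acyclic : Prop := forall c : seq V, ucycle und c -> size c <= 2.
Definition ditree : Prop := [/\ loopless, und_connected & und_acyclic].

Definition leaf (x : V) : bool := #|[set y | und x y]| == 1.
Definition source (x : V) : bool := [forall y, ~~ a y x].
Definition sink (x : V) : bool := [forall y, ~~ a x y].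

Definition scc (x : V) : {set V} := [set y | connect a x y && connect a y x].

Definition source_set (S : {set V}) : Prop :=
  (exists x, S = scc x) /\ (forall u v, v \in S -> a u v -> u \in S).
Definition sink_set (S : {set V}) : Prop :=
  (exists x, S = scc x) /\ (forall u v, u \in S -> a u v -> v \in S).

(* directed walks from u: path a u p, ending at last u p, of length size p *)
Definition shortest_path (u v : V) (p : seq V) : Prop :=
  [/\ path a u p, last u p = v &
      forall q, path a u q -> last u q = v -> size p <= size q].

Definition interval (u v w : V) : Prop :=
  exists p, shortest_path u v p /\ w \in u :: p.

Definition geodetic (S : {set V}) : Prop :=
  forall w, exists u v, [/\ u \in S, v \in S & (interval u v w \/ interval v u w)].

End Digraphs.

From mathcomp Require Import all_boot.
Set Implicit Arguments. Unset Strict Implicit. Unset Printing Implicit Defensive.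

(* Minimality: a sink can only end a shortest path and a source can only start
   one, while a leaf cannot be interior to one, as its two neighbours on the
   path would coincide and the path could be shortcut.

   Geodeticity: let w be neither a sink, a source nor a leaf, and call the
   component of T - w containing a neighbour z of w the branch of z. Among the
   ancestors of any vertex there is an initial strong component; it is a source
   set, hence contains a source or a leaf.  Applied to w (and dually to the
   converse digraph) this yields a branch from which such a vertex u reaches w
   and a branch into which w reaches such a vertex v.  If these branches differ,
   every u-v walk passes through w, in particular a shortest one.  Otherwise,
   as w is not a leaf, it suffices that in every branch some such vertex
   reaches w or is reached from w.  Say z -> w.  Inside the branch of z, the
   initial strong component above z is either a source set of T, whose source
   or leaf then reaches w through z, or it is entered from outside, necessarily
   along w -> z, so that z itself lies in an initial strong component of the
   branch.  If this happens both in T and in its converse, the branch is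
   strongly connected with arcs both ways to w, and any leaf in it reaches w. *)

Section Digraph.
Variables (V : finType) (a : rel V).

Definition extremal : {set V} := [set x | [|| sink a x, source a x | leaf a x]].

Definition initial (c : V) : Prop := forall y, connect a y c -> connect a c y.

Definition within (Z : {set V}) : rel V := [rel x y | [&& a x y, x \in Z & y \in Z]].

Definition avoid (w : V) : rel V := [rel x y | [&& und a x y, x != w & y != w]].

Definition branch (w z : V) : {set V} := [set t | connect (avoid w) z t].

Definition branch_reaches (w z : V) : Prop :=
  exists u, [/\ u \in extremal, u \in branch w z & connect a u w].

Definition branch_reached (w z : V) : Prop :=
  exists u, [/\ u \in extremal, u \in branch w z & connect a w u].

Lemma connect_forward_closed (e : rel V) (P : pred V) x y :
  (forall u v, P u -> e u v -> P v) -> connect e x y -> P x -> P y.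
Proof.
move=> Pe /connectP[p pP ->]; elim: p x pP => [|z p IHp] x //= /andP[exz pP] Px.
exact: IHp pP (Pe _ _ Px exz).
Qed.

Lemma exists_initial_ancestor x : exists2 c, connect a c x & initial c.
Proof.
pose anc c := [set y | connect a y c].
have ancx : [pred c | connect a c x] x by apply: connect0.
case: (arg_minnP (fun c => #|anc c|) ancx) => c /= cx cmin.
exists c => // y yc.
have sub : anc y \subset anc c.
  by apply/subsetP => t; rewrite !inE => /connect_trans; apply.
have /eqP ancE : anc y == anc c by rewrite eqEcard sub cmin //= (connect_trans yc cx).
have : c \in anc c by rewrite inE connect0.
by rewrite -ancE inE.
Qed.

Lemma shortest_path_exists u v : connect a u v -> exists p, shortest_path a u v p.
Proof.
move/connectP=> [p0 p0P ->].
pose walk n := [exists q : n.-tuple V, path a u q && (last u q == last u p0)].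
have walk_p0 : exists n, walk n.
  by exists (size p0); apply/existsP; exists (in_tuple p0); rewrite p0P eqxx.
case: (ex_minnP walk_p0) => n /existsP[q /andP[qP /eqP ql]] nmin.
exists q; split => // q' q'P q'l; rewrite size_tuple; apply: nmin.
by apply/existsP; exists (in_tuple q'); rewrite q'P q'l eqxx.
Qed.

Lemma und_sym x y : und a x y = und a y x.
Proof. by rewrite /und orbC. Qed.

Lemma leaf_neighbour_uniq x y y' : leaf a x -> und a x y -> und a x y' -> y = y'.
Proof.
case/cards1P=> z zE xy xy'.
have : y' \in [set t | und a x t] by rewrite inE.
have : y \in [set t | und a x t] by rewrite inE.
by rewrite zE !inE => /eqP -> /eqP ->.
Qed.

Lemma nonleaf_other_neighbour w z :
  ~~ leaf a w -> und a w z -> exists2 z', und a w z' & z' != z.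
Proof.
move=> wnl wz; apply/exists_inP; apply: contraR wnl => /exists_inPn nz.
apply/cards1P; exists z; apply/setP => t; rewrite !inE.
by apply/idP/eqP => [wt | ->]; [apply/eqP/negbNE/nz | ].
Qed.

Lemma shortest_path_interior u v p1 x y p2 :
  shortest_path a u v (p1 ++ x :: y :: p2) ->
  [/\ a (last u p1) x, a x y & last u p1 != y].
Proof.
case; rewrite cat_path last_cat /= => /and3P[p1P ax /andP[axy p2P]] pv pmin.
split=> //; apply/eqP=> ey.
have := pmin (p1 ++ p2); rewrite cat_path p1P ey p2P last_cat ey pv !size_cat /=.
by move=> /(_ isT erefl); rewrite leq_add2l ltnNge leqnSn.
Qed.

Lemma extremal_on_shortest_path u v p x :
  shortest_path a u v p -> x \in u :: p -> x \in extremal -> x = u \/ x = v.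
Proof.
move=> sp; rewrite inE => /predU1P[-> | xp] xS; [by left | right].
case/splitPr: xp sp => p1 [|y p2] sp.
  by case: sp => _ <- _; rewrite last_cat.
have [ax axy yx] := shortest_path_interior sp.
exfalso; move: xS; rewrite inE => /or3P[/forallP/(_ y) | /forallP/(_ (last u p1)) | xl].
- by rewrite axy.
- by rewrite ax.
by case/eqP: yx; apply: (leaf_neighbour_uniq xl); rewrite /und ?ax ?axy ?orbT.
Qed.

Lemma extremal_sub_geodetic S : geodetic a S -> extremal \subset S.
Proof.
move=> gS; apply/subsetP => x xS.
have [u [v [uS vS [] [p [sp xp]]]]] := gS x.
  by case: (extremal_on_shortest_path sp xp xS) => ->.
by case: (extremal_on_shortest_path sp xp xS) => ->.
Qed.

Lemma avoid_sym w : symmetric (avoid w).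
Proof. by move=> x y; rewrite /avoid /= und_sym (andbC (x != w)). Qed.

Lemma path_avoidE w x q :
  x != w -> path (avoid w) x q = path (und a) x q && (w \notin x :: q).
Proof.
elim: q x => [|y q IHq] x xw /=; first by rewrite inE eq_sym xw.
rewrite /avoid /= xw; case: (eqVneq y w) => [-> | yw].
  by rewrite !inE eqxx !orbT !andbF.
by rewrite IHq // [w \in x :: _]in_cons negb_or eq_sym xw andbT andbA.
Qed.

Lemma within_connect_sub Z x y : connect (within Z) x y -> connect a x y.
Proof. by apply: connect_sub => u v /and3P[auv _ _]; apply: connect1. Qed.

Lemma within_connect_mem Z x y : connect (within Z) x y -> y \in Z -> x \in Z.
Proof. by case/connectP=> [[|t p] /= pP ->] //; case/andP: pP => /and3P[]. Qed.

Lemma walk_enters_branch w u p :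
  path a u p -> last u p = w -> u != w -> exists2 z, a z w & u \in branch w z.
Proof.
elim: p u => [|v p IHp] u /=; first by move=> _ ->; rewrite eqxx.
move=> /andP[auv pP] pw uw; case: (eqVneq v w) => [vw | vw].
  by exists u; rewrite -?vw // inE connect0.
have [z azw] := IHp v pP pw vw; rewrite !inE => zv.
exists z; rewrite // inE (connect_trans zv) // connect1 // /avoid /= vw uw.
by rewrite /und auv orbT.
Qed.

End Digraph.

Section Converse.
Variables (V : finType) (a : rel V).

Definition converse : rel V := [rel x y | a y x].

Lemma connect_converse x y : connect converse x y = connect a y x.
Proof. exact: connect_rev. Qed.

Lemma und_converse : und converse =2 und a.
Proof. by move=> x y; rewrite /und orbC. Qed.

Lemma leaf_converse x : leaf converse x = leaf a x.
Proof. by rewrite /leaf (@eq_finset _ _ _ (und_converse x)). Qed.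

Lemma extremal_converse : extremal converse = extremal a.
Proof. by apply/setP => x; rewrite !inE leaf_converse orbCA. Qed.

Lemma branch_converse w z : branch converse w z = branch a w z.
Proof.
apply/setP => t; rewrite !inE; apply: eq_connect => x y.
by rewrite /avoid /= und_converse.
Qed.

Lemma connect_within_converse Z x y :
  connect (within converse Z) x y = connect (within a Z) y x.
Proof.
rewrite -[RHS]connect_rev; apply: eq_connect => u v.
by rewrite /within /= (andbC (u \in Z)).
Qed.

Lemma scc_converse x : scc converse x = scc a x.
Proof. by apply/setP => y; rewrite !inE !connect_converse andbC. Qed.

Lemma ditree_converse : ditree a -> ditree converse.
Proof.
case=> loopless conn acyclic; split => [x | x y | c].
- exact: loopless.
- by rewrite (eq_connect und_converse).
- by rewrite /ucycle (eq_cycle und_converse); apply: acyclic.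
Qed.

Lemma converse_source_leaf :
  (forall S : {set V}, sink_set a S -> 2 <= #|S| -> exists2 x, x \in S & leaf a x) ->
  forall S : {set V}, source_set converse S -> 2 <= #|S| ->
    exists2 x, x \in S & leaf converse x.
Proof.
move=> sink_leaf S [[x ->] closed]; rewrite scc_converse => S2.
have [|y yS yl] := sink_leaf _ _ S2.
  2: by exists y; rewrite ?scc_converse ?leaf_converse.
split=> [|u v uS auv]; first by exists x.
by rewrite -scc_converse; apply: (closed v u); rewrite ?scc_converse.
Qed.

Lemma branch_reaches_converse w z :
  branch_reaches converse w z -> branch_reached a w z.
Proof.
case=> u [uS uB uw]; exists u.
by rewrite -extremal_converse -branch_converse -connect_converse.
Qed.

End Converse.

Section Tree.
Variables (V : finType) (a : rel V).
Hypothesis tree : ditree a.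

Lemma und_neq x y : und a x y -> x != y.
Proof.
case: tree => loopless _ _; apply: contraTneq => ->.
by rewrite /und orbb (negbTE (loopless y)).
Qed.

Lemma branch_neq w z t : und a w z -> t \in branch a w z -> t != w.
Proof.
move=> wz; rewrite inE => /(connect_forward_closed (P := predC1 w)); apply.
  by move=> u v _; rewrite /avoid /= => /and3P[].
by rewrite /= eq_sym und_neq.
Qed.

Lemma neighbours_disconnected w x y :
  und a w x -> und a w y -> connect (avoid a w) x y -> x = y.
Proof.
have [_ _ acyclic] := tree.
move=> wx wy /connectP[p pP yE]; case: (eqVneq x y) => // xy; exfalso.
move: wy xy; rewrite yE; case: (shortenP pP) => q qP uq _ wy xy.
have xw : x != w by rewrite eq_sym und_neq.
move: qP; rewrite path_avoidE // => /andP[qP wq].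
have /acyclic : ucycle (und a) (w :: x :: q).
  by rewrite /ucycle /= rcons_path wx qP und_sym wy wq -cons_uniq uq.
by case: q {qP wq uq wy} xy => [|? ?]; rewrite ?eqxx.
Qed.

Lemma branch_boundary w z t u :
  und a w z -> t \in branch a w z -> u \notin branch a w z -> und a u t ->
  u = w /\ t = z.
Proof.
move=> wz tB uB ut; have tw := branch_neq wz tB.
case: (eqVneq u w) => [uw | uw].
  split=> //; apply/esym/(neighbours_disconnected wz); first by rewrite -uw.
  by rewrite inE in tB.
case/negP: uB; move: tB; rewrite !inE => /connect_trans; apply; apply: connect1.
by rewrite /avoid /= und_sym ut tw uw.
Qed.

Lemma branch_sub p t s :
  und a p t -> und a t s -> s != p -> branch a t s \subset branch a p t.
Proof.
move=> pt ts sp; apply/subsetP => r; rewrite !inE => /connectP[q qP ->].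
have [st tp] : s != t /\ t != p by rewrite eq_sym und_neq // eq_sym und_neq.
have pq : p \notin s :: q.
  apply: contra sp => /(path_connect qP) sp.
  by apply/eqP/(neighbours_disconnected ts); rewrite // und_sym.
move: qP; rewrite path_avoidE // => /andP[qP _].
apply: (connect_trans (y := s)); first by apply: connect1; rewrite /avoid /= ts tp.
by apply/connectP; exists q; rewrite // path_avoidE ?qP.
Qed.

Lemma branch_has_leaf w z : und a w z -> exists2 l, l \in branch a w z & leaf a l.
Proof.
move=> wz.
pose inside (pt : V * V) := und a pt.1 pt.2 && (branch a pt.1 pt.2 \subset branch a w z).
have inside_wz : inside (w, z) by rewrite /inside wz subxx.
case: (arg_minnP (fun pt : V * V => #|branch a pt.1 pt.2|) inside_wz).
move=> [p t] /andP[/= pt sub] tmin.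
have tB : t \in branch a p t by rewrite inE connect0.
exists t; first exact: subsetP sub t tB.
apply/cards1P; exists p; apply/setP => s; rewrite !inE.
apply/idP/eqP => [ts | ->]; last by rewrite und_sym.
apply/eqP; apply: contraT => sp; have ts_sub := branch_sub pt ts sp.
have : #|branch a p t| <= #|branch a t s|.
  by apply: (tmin (t, s)); rewrite /inside /= ts (subset_trans ts_sub sub).
rewrite leqNgt proper_card //; apply/properP; split=> //; exists t => //.
by apply/negP => /(branch_neq ts); rewrite eqxx.
Qed.

Lemma walk_between_branches w z1 z2 u p :
  und a w z1 -> und a w z2 -> z1 != z2 ->
  u \in branch a w z1 -> last u p \in branch a w z2 -> path a u p -> w \in u :: p.
Proof.
move=> wz1 wz2 z12 uB vB pP; apply: contraNT z12 => wp.
have up : path (avoid a w) u p.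
  rewrite path_avoidE ?(branch_neq wz1) // wp andbT.
  by apply: sub_path pP => x y axy; rewrite /und axy.
apply/eqP/(neighbours_disconnected wz1 wz2); move: uB vB; rewrite !inE => z1u z2v.
apply: (connect_trans z1u); apply: (connect_trans (path_connect up (mem_last u p))).
by rewrite (sym_connect_sym (@avoid_sym _ a w)).
Qed.

Lemma strongly_connected_branch_reaches w z :
  und a w z -> a z w ->
  initial (within a (branch a w z)) z ->
  initial (within (converse a) (branch a w z)) z ->
  branch_reaches a w z.
Proof.
move=> wz azw z_init z_final; set Z := branch a w z; set e := within a Z.
have Z_to_z t : t \in Z -> connect e t z.
  rewrite inE => zt; suff /andP[] : connect (avoid a w) z t && connect e t z by [].
  pose P s := connect (avoid a w) z s && connect e s z.
  apply: (connect_forward_closed (P := P)) zt _; last by rewrite /P !connect0.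
  move=> s r /andP[zs sz] sr; have zr := connect_trans zs (connect1 sr).
  have [sZ rZ] : s \in Z /\ r \in Z by rewrite !inE.
  rewrite /P zr /=; case/and3P: sr => /orP[asr | ars] _ _.
    rewrite -connect_within_converse; apply: z_final; rewrite connect_within_converse.
    by apply: connect_trans (z_init _ sz) (connect1 _); rewrite /e /within /= asr sZ rZ.
  by apply: connect_trans (connect1 _) sz; rewrite /e /within /= ars rZ sZ.
have [l lZ ll] := branch_has_leaf wz.
exists l; split=> //; first by rewrite inE ll !orbT.
exact: connect_trans (within_connect_sub (Z_to_z l lZ)) (connect1 azw).
Qed.

End Tree.

Section SourceSide.
Variables (V : finType) (a : rel V).
Hypothesis tree : ditree a.
Hypothesis source_leaf :
  forall S : {set V}, source_set a S -> 2 <= #|S| -> exists2 x, x \in S & leaf a x.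

Lemma initial_extremal c : initial a c -> exists2 u, u \in extremal a & connect a u c.
Proof.
move=> c_init; set C := scc a c.
have cC : c \in C by rewrite inE connect0.
have C_closed u v : v \in C -> a u v -> u \in C.
  by rewrite !inE => /andP[_ vc] auv; rewrite c_init (connect_trans (connect1 auv) vc).
have [C2 | C1] := leqP 2 #|C|.
  have [|x xC xl] := source_leaf _ C2; first by split; [exists c | exact: C_closed].
  by exists x; [rewrite inE xl !orbT | move: xC; rewrite inE => /andP[]].
suff c_src : source a c by exists c; rewrite ?inE ?c_src ?orbT ?connect0.
apply/forallP => y; apply/negP => ayc.
have /cards1P[x CE] : #|C| == 1.
  by rewrite eqn_leq -ltnS C1 card_gt0; apply/set0Pn; exists c.
have := C_closed _ _ cC ayc; move: cC; rewrite CE !inE => /eqP cx /eqP yx.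
by case: tree => loopless _ _; move: ayc; rewrite cx yx (negbTE (loopless x)).
Qed.

Lemma extremal_reaches x : exists2 u, u \in extremal a & connect a u x.
Proof.
have [c cx /initial_extremal[u uS uc]] := exists_initial_ancestor a x.
by exists u => //; apply: connect_trans uc cx.
Qed.

Lemma branch_reaches_exists w :
  w \notin extremal a -> exists2 z, und a w z & branch_reaches a w z.
Proof.
move=> wS; have [u uS uw] := extremal_reaches w.
have unw : u != w by apply: contraNneq wS => <-.
case/connectP: (uw) => p pP pw.
have [z azw zu] := walk_enters_branch pP (esym pw) unw.
by exists z; [rewrite /und azw orbT | exists u].
Qed.

Lemma initial_or_branch_reaches w z :
  und a w z -> a z w ->
  branch_reaches a w z \/ a w z /\ initial (within a (branch a w z)) z.
Proof.
move=> wz azw; set Z := branch a w z; set e := within a Z.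
have zZ : z \in Z by rewrite inE connect0.
have [c cz c_init] := exists_initial_ancestor e z.
have cZ := within_connect_mem cz zZ.
pose entering (ut : V * V) := [&& connect e ut.2 c, a ut.1 ut.2 & ~~ connect e ut.1 c].
case: (pickP entering).
  move=> [u t] /and3P[/= tc aut uc]; right.
  have tZ := within_connect_mem tc cZ.
  have uZ : u \notin Z.
    apply: contra uc => uZ; apply: connect_trans (connect1 _) tc.
    by rewrite /e /within /= aut uZ tZ.
  have ut : und a u t by rewrite /und aut.
  have [uw tz] := branch_boundary tree wz tZ uZ ut.
  move: tc aut; rewrite uw tz => zc awz; split=> // y yz.
  exact: connect_trans zc (c_init _ (connect_trans yz zc)).
move=> closed; left.
have anc u : connect a u c -> connect e u c.
  rewrite -connect_converse => /(connect_forward_closed (P := connect e ^~ c)); apply.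
    move=> s t sc ats; have := closed (t, s).
    by rewrite /entering /= sc (ats : a t s) /= => /negbFE.
  exact: connect0.
have [u uS uc] : exists2 u, u \in extremal a & connect a u c.
  by apply: initial_extremal => y /anc /c_init /within_connect_sub.
exists u; split=> //; first by rewrite (within_connect_mem (anc _ uc) cZ).
exact: connect_trans uc (connect_trans (within_connect_sub cz) (connect1 azw)).
Qed.

End SourceSide.

Section Geodetic.
Variables (V : finType) (a : rel V).
Hypothesis tree : ditree a.
Hypothesis source_leaf :
  forall S : {set V}, source_set a S -> 2 <= #|S| -> exists2 x, x \in S & leaf a x.
Hypothesis sink_leaf :
  forall S : {set V}, sink_set a S -> 2 <= #|S| -> exists2 x, x \in S & leaf a x.

Let tree_converse := ditree_converse tree.
Let source_leaf_converse := converse_source_leaf sink_leaf.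

Lemma branch_reached_exists w :
  w \notin extremal a -> exists2 z, und a w z & branch_reached a w z.
Proof.
rewrite -extremal_converse => /(branch_reaches_exists tree_converse source_leaf_converse).
by case=> z wz /branch_reaches_converse; exists z; rewrite // -und_converse.
Qed.

Lemma branch_reaches_or_reached w z :
  und a w z -> branch_reaches a w z \/ branch_reached a w z.
Proof.
move=> wz; have reaches := initial_or_branch_reaches tree source_leaf wz.
have reached (awz : a w z) :
    branch_reached a w z \/ a z w /\ initial (within (converse a) (branch a w z)) z.
  have := initial_or_branch_reaches tree_converse source_leaf_converse _ awz.
  rewrite branch_converse und_converse => /(_ wz).
  by case=> [/branch_reaches_converse |]; [left | right].
case/orP: (wz) => [awz | azw].
  case: (reached awz) => [| [azw z_final]]; first by right.
  case: (reaches azw) => [| [_ z_init]]; first by left.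
  by left; apply: strongly_connected_branch_reaches.
case: (reaches azw) => [| [awz z_init]]; first by left.
case: (reached awz) => [| [_ z_final]]; first by right.
by left; apply: strongly_connected_branch_reaches.
Qed.

Lemma branches_interval w z1 z2 :
  und a w z1 -> und a w z2 -> z1 != z2 ->
  branch_reaches a w z1 -> branch_reached a w z2 ->
  exists u v, [/\ u \in extremal a, v \in extremal a & interval a u v w].
Proof.
move=> wz1 wz2 z12 [u [uS uB uw]] [v [vS vB wv]].
have [p sp] := shortest_path_exists (connect_trans uw wv).
exists u, v; split=> //; exists p; split=> //; case: sp => pP pv _.
by apply: (walk_between_branches tree wz1 wz2 z12 uB); rewrite ?pv.
Qed.

Lemma extremal_geodetic : geodetic a (extremal a).
Proof.
move=> w; case: (boolP (w \in extremal a)) => wS.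
  by exists w, w; split=> //; left; exists [::]; split; [split | exact: mem_head].
suff [u [v [uS vS uvw]]] :
    exists u v, [/\ u \in extremal a, v \in extremal a & interval a u v w].
  by exists u, v; split=> //; left.
have [z1 wz1 reaches1] := branch_reaches_exists tree source_leaf wS.
have [z2 wz2 reached2] := branch_reached_exists wS.
case: (eqVneq z1 z2) => [ez | z12].
  2: exact: branches_interval wz1 wz2 z12 reaches1 reached2.
have wnl : ~~ leaf a w by apply: contraNN wS => wl; rewrite inE wl !orbT.
have [z wz zz1] := nonleaf_other_neighbour wnl wz1.
case: (branch_reaches_or_reached wz) => [reaches | reached].
  by apply: branches_interval wz wz2 _ reaches reached2; rewrite -ez.
by apply: branches_interval wz1 wz _ reaches1 reached; rewrite eq_sym.
Qed.

End Geodetic.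

Theorem lemma3 (V : finType) (a : rel V) :
  ditree a ->
  (forall S : {set V}, source_set a S -> 2 <= #|S| -> exists2 x, x \in S & leaf a x) ->
  (forall S : {set V}, sink_set a S -> 2 <= #|S| -> exists2 x, x \in S & leaf a x) ->
  let S := [set x | [|| sink a x, source a x | leaf a x]] in
  geodetic a S /\ (forall S' : {set V}, geodetic a S' -> #|S| <= #|S'|).
Proof.
move=> tree source_leaf sink_leaf S; split; first exact: extremal_geodetic.
by move=> S' /extremal_sub_geodetic /subset_leq_card.
Qed.
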